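(* For all processes $s,t$, $D_{\mathcal{L}}(s,t)=0$ if and only if $s$ and $t$ are strong probabilistic trace equivalent.
   Context: PTS $(\mathcal{S},A,\to)$ with finitely supported distributions; processes image-finite and finite. Computations $c=s_0\xrightarrow{a_1}\cdots\xrightarrow{a_n}s_n$ via transitions $s_{i-1}\xrightarrow{a_i}\pi_i$, $s_i\in\mathrm{supp}(\pi_i)$; $\Pr(c)=\prod\pi_i(s_i)$ (empty: 1); $|c|=n$; $\mathrm{tr}(c)=a_1\cdots a_n$; $\mathcal{C}(z,\alpha)$ computations from $z$ with trace $\alpha$; maximal = not a proper prefix of another computation from the same process; $\mathcal{C}_{\max}(z)$; $\Pr$ of a set is the sum. A resolution of $s$ is a PTS $\mathcal{Z}=(Z,A,\to_{\mathcal{Z}})$ with $\mathrm{corr}\colon Z\to\mathcal{S}$ and initial state $z_s$, $\mathrm{corr}(z_s)=s$, such that $z_s$ is in no target support, every other state is in the support of a target of a transition from a different state, every $z\xrightarrow{a}_{\mathcal{Z}}\pi$ is matched by $\mathrm{corr}(z)\xrightarrow{a}\pi'$ with $\pi(z')=\pi'(\mathrm{corr}(z'))$, and each state has at most one outgoing transition; $\mathrm{res}(s)$ the set of resolutions. $s,t$ are strong probabilistic trace equivalent iff for each $\mathcal{Z}_s\in\mathrm{res}(s)$ there is $\mathcal{Z}_t\in\mathrm{res}(t)$ with $\Pr(\mathcal{C}(z_s,\alpha))=\Pr(\mathcal{C}(z_t,\alpha))$ for all $\alpha\in A^\star$, and symmetrically. Logic $\mathcal{L}$: trace formulae $\Phi::=\top\mid\langle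 a\rangle\Phi$, $\mathrm{depth}(\top)=0$, $\mathrm{depth}(\langle a\rangle\Phi)=1+\mathrm{depth}(\Phi)$; trace distribution formulae $\bigoplus_{i\in I}r_i\Phi_i$ ($I$ finite nonempty, $\Phi_i$ pairwise distinct, $r_i\in(0,1]$, $\sum r_i=1$), identified with distributions on trace formulae. $c\models\top$ always; $c\models\langle a\rangle\Phi$ iff $c=s\xrightarrow{a}c'$ with $c'\models\Phi$. $s\models\bigoplus_i r_i\Phi_i$ iff some $\mathcal{Z}\in\mathrm{res}(s)$ with initial state $z$ satisfies $\Pr(\{c\in\mathcal{C}_{\max}(z):c\models\Phi_i,|c|=\mathrm{depth}(\Phi_i)\})=r_i$ for all $i$; $\mathcal{L}(s)$ the set of formulae satisfied by $s$. $d(\Phi_1,\Phi_2)=0$ if equal, else $1$; $D(\Psi_1,\Psi_2)=\min_\omega\sum\omega(\Phi,\Phi')d(\Phi,\Phi')$ over couplings $\omega$ of $\Psi_1,\Psi_2$. Hausdorff lifting: $\mathcal{H}(D)(X,Y)=\max\{\sup_{x\in X}\inf_{y\in Y}D(x,y),\sup_{y\in Y}\inf_{x\in X}D(y,x)\}$ ($\inf\emptyset=1$, $\sup\emptyset=0$). $D_{\mathcal{L}}(s,t)=\mathcal{H}(D)(\mathcal{L}(s),\mathcal{L}(t))$. *)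

From Stdlib Require Import Reals List Classical ClassicalEpsilon.
Import ListNotations.
Open Scope R_scope.
Set Implicit Arguments.

(* Sum of f over a set C, when C is finite (enumerated by a duplicate-free list);
   0 otherwise (never used in that case). *)
Definition set_sum {T : Type} (C : T -> Prop) (f : T -> R) : R :=
  match excluded_middle_informative
          (exists L : list T, NoDup L /\ forall x, In x L <-> C x) with
  | left H =>
      fold_right (fun x acc => f x + acc) 0
        (proj1_sig (constructive_indefinite_description _ H))
  | right _ => 0
  end.

Definition Rsup (E : R -> Prop) (dflt : R) : R :=
  match excluded_middle_informative (exists l, is_lub E l) with
  | left H => proj1_sig (constructive_indefinite_description _ H)
  | right _ => dflt
  end.

Definition Rinf (E : R -> Prop) (dflt : R) : R :=
  match excluded_middle_informative (exists l, is_lub (fun x => E (- x)) l) with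
  | left H => - proj1_sig (constructive_indefinite_description _ H)
  | right _ => dflt
  end.

Definition is_fdist {T : Type} (pi : T -> R) : Prop :=
  (forall x, 0 <= pi x) /\
  exists L : list T, NoDup L /\ (forall x, pi x <> 0 -> In x L) /\
    fold_right (fun x acc => pi x + acc) 0 L = 1.

Definition trans (X A : Type) := X -> A -> (X -> R) -> Prop.

Definition is_PTS {X A : Type} (st : trans X A) : Prop :=
  forall s a pi, st s a pi -> is_fdist pi.

Definition image_finite {X A : Type} (st : trans X A) : Prop :=
  forall s a, exists L : list (X -> R), forall pi, st s a pi -> In pi L.

(* a computation from s is the list of its steps (a_i, pi_i, s_i) *)
Definition comp (X A : Type) := list (A * (X -> R) * X).

Fixpoint valid_from {X A : Type} (st : trans X A) (s : X) (c : comp X A) : Prop :=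
  match c with
  | [] => True
  | (a, pi, s') :: c' => st s a pi /\ 0 < pi s' /\ valid_from st s' c'
  end.

Fixpoint comp_pr {X A : Type} (c : comp X A) : R :=
  match c with
  | [] => 1
  | (_, pi, s') :: c' => pi s' * comp_pr c'
  end.

Definition comp_tr {X A : Type} (c : comp X A) : list A :=
  map (fun p => fst (fst p)) c.

Definition maximal_from {X A : Type} (st : trans X A) (s : X) (c : comp X A) : Prop :=
  valid_from st s c /\
  ~ exists ext : comp X A, ext <> [] /\ valid_from st s (c ++ ext).

Definition finite_proc {X A : Type} (st : trans X A) (s : X) : Prop :=
  exists N : nat, forall c, valid_from st s c -> (length c <= N)%nat.

Record resolution {S A : Type} (st : trans S A) (s : S) := {
  rZ : Type;
  rstep : trans rZ A;
  rcorr : rZ -> S;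
  rinit : rZ;
  r_pts : is_PTS rstep;
  r_corr_init : rcorr rinit = s;
  r_init_fresh : forall z a pi, rstep z a pi -> ~ (0 < pi rinit);
  r_reach : forall z, z <> rinit ->
     exists z' a pi, z' <> z /\ rstep z' a pi /\ 0 < pi z;
  r_match : forall z a pi, rstep z a pi ->
     exists pi', st (rcorr z) a pi' /\ forall z', pi z' = pi' (rcorr z');
  r_det : forall z a1 pi1 a2 pi2,
     rstep z a1 pi1 -> rstep z a2 pi2 -> a1 = a2 /\ pi1 = pi2
}.

Arguments rZ {S A st s}.
Arguments rstep {S A st s}.
Arguments rcorr {S A st s}.
Arguments rinit {S A st s}.

Definition Pr_trace {S A : Type} {st : trans S A} {s : S}
  (Z : resolution st s) (alpha : list A) : R :=
  set_sum (fun c : comp (rZ Z) A => valid_from (rstep Z) (rinit Z) c /\ comp_tr c = alpha)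
          comp_pr.

Definition ptrace_equiv {S A : Type} (st : trans S A) (s t : S) : Prop :=
  (forall Zs : resolution st s, exists Zt : resolution st t,
      forall alpha, Pr_trace Zs alpha = Pr_trace Zt alpha) /\
  (forall Zt : resolution st t, exists Zs : resolution st s,
      forall alpha, Pr_trace Zt alpha = Pr_trace Zs alpha).

Inductive tformula (A : Type) : Type :=
| TTop : tformula A
| TDiam : A -> tformula A -> tformula A.
Arguments TTop {A}.

Fixpoint depth {A} (f : tformula A) : nat :=
  match f with TTop => O | TDiam _ f' => S (depth f') end.

Fixpoint csat {X A : Type} (c : comp X A) (f : tformula A) : Prop :=
  match f with
  | TTop => True
  | TDiam a f' =>
      match c with
      | [] => False
      | (b, _, _) :: c' => b = a /\ csat c' f'
      end
  end.

(* trace distribution formulae = finitely supported distributions on trace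
   formulae: (+)_{i in I} r_i Phi_i with I the support *)
Definition tdformula (A : Type) := tformula A -> R.

Definition is_tdf {A} (Psi : tdformula A) : Prop := is_fdist Psi.

Definition sat_state {S A : Type} (st : trans S A) (s : S) (Psi : tdformula A) : Prop :=
  exists Z : resolution st s, forall Phi, 0 < Psi Phi ->
    set_sum (fun c : comp (rZ Z) A =>
               maximal_from (rstep Z) (rinit Z) c /\ csat c Phi /\ length c = depth Phi)
            comp_pr = Psi Phi.

Definition Lset {S A : Type} (st : trans S A) (s : S) : tdformula A -> Prop :=
  fun Psi => is_tdf Psi /\ sat_state st s Psi.

Definition dtf {A} (p : tformula A * tformula A) : R :=
  if excluded_middle_informative (fst p = snd p) then 0 else 1.

Definition coupling {A} (Psi1 Psi2 : tdformula A)
    (w : tformula A * tformula A -> R) : Prop :=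
  is_fdist w /\
  (forall Phi, set_sum (fun p => fst p = Phi /\ w p <> 0) w = Psi1 Phi) /\
  (forall Phi, set_sum (fun p => snd p = Phi /\ w p <> 0) w = Psi2 Phi).

Definition Dtdf {A} (Psi1 Psi2 : tdformula A) : R :=
  Rinf (fun r => exists w, coupling Psi1 Psi2 w /\
                   r = set_sum (fun p => w p <> 0) (fun p => w p * dtf p)) 1.

Definition Hlift {T : Type} (D : T -> T -> R) (X Y : T -> Prop) : R :=
  Rmax (Rsup (fun r => exists x, X x /\ r = Rinf (fun r' => exists y, Y y /\ r' = D x y) 1) 0)
       (Rsup (fun r => exists y, Y y /\ r = Rinf (fun r' => exists x, X x /\ r' = D y x) 1) 0).

Definition DL {S A : Type} (st : trans S A) (s t : S) : R :=
  Hlift Dtdf (Lset st s) (Lset st t).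

(* A resolution Z of a process realises the trace distribution formula [res_tdf Z] (the law
   of the traces of its maximal computations), and the formulae of L(s) are exactly the
   distributions that agree with such a law on their support.  For finite processes the law of
   maximal traces and the trace probabilities alpha |-> Pr(C(z, alpha)) determine each other,
   since Pr(C(alpha)) = Pr_max(alpha) + sum_b Pr(C(alpha b)).  Hence if s and t are trace
   equivalent, every formula of L(s) lies in L(t), and D_L(s, t) = 0.
   Conversely, D dominates pointwise differences, so if D_L(s, t) = 0 the law Psi of a resolution
   of s is approximated pointwise by formulae of L(t).  By image-finiteness, the probability of a
   fixed maximal trace ranges over a finite set of values among resolutions of t, so a close
   enough approximation equals Psi on its support; both having total mass at most 1, the
   corresponding resolution of t has law exactly Psi. *)

From Stdlib Require Import Reals List Classical ClassicalEpsilon Permutation Lra Lia.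
Import ListNotations.
Open Scope R_scope.

(** * Finite sums *)

Definition decb (P : Prop) : bool := if excluded_middle_informative P then true else false.

Lemma decb_true (P : Prop) : decb P = true <-> P.
Proof. unfold decb; destruct (excluded_middle_informative P); intuition congruence. Qed.

Definition lsum {T : Type} (f : T -> R) (L : list T) : R :=
  fold_right (fun x acc => f x + acc) 0 L.

Section ListSum.
Context {T : Type}.
Implicit Types (f g : T -> R) (L : list T).

Lemma lsum_cons f x L : lsum f (x :: L) = f x + lsum f L.
Proof. reflexivity. Qed.

Lemma lsum_app f L1 L2 : lsum f (L1 ++ L2) = lsum f L1 + lsum f L2.
Proof. unfold lsum; induction L1 as [|x L1 IH]; simpl; [lra|]. rewrite IH; lra. Qed.

Lemma lsum_perm f L1 L2 : Permutation L1 L2 -> lsum f L1 = lsum f L2.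
Proof. unfold lsum; induction 1; simpl; lra. Qed.

Lemma lsum_ext f g L : (forall x, In x L -> f x = g x) -> lsum f L = lsum g L.
Proof.
  induction L as [|x L IH]; intros H; cbn; [reflexivity|].
  rewrite (H x (or_introl eq_refl)). f_equal. apply IH. intros; apply H; right; auto.
Qed.

Lemma lsum_le f g L : (forall x, In x L -> f x <= g x) -> lsum f L <= lsum g L.
Proof.
  induction L as [|x L IH]; intros H; cbn; [lra|].
  apply Rplus_le_compat; [apply H; left; auto | apply IH; intros; apply H; right; auto].
Qed.

Lemma lsum_zero f L : (forall x, In x L -> f x = 0) -> lsum f L = 0.
Proof.
  intros H. rewrite (lsum_ext f (fun _ => 0)) by auto. clear H.
  unfold lsum; induction L as [|x L IH]; simpl; [reflexivity|]. rewrite IH; lra.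
Qed.

Lemma lsum_nonneg f L : (forall x, In x L -> 0 <= f x) -> 0 <= lsum f L.
Proof. intros H. rewrite <- (lsum_zero (fun _ => 0) L) by auto. apply lsum_le; auto. Qed.

Lemma lsum_scal f c L : lsum (fun x => c * f x) L = c * lsum f L.
Proof. unfold lsum; induction L as [|x L IH]; simpl; [lra|]. rewrite IH; lra. Qed.

Lemma lsum_plus f g L : lsum (fun x => f x + g x) L = lsum f L + lsum g L.
Proof. unfold lsum; induction L as [|x L IH]; simpl; [lra|]. rewrite IH; lra. Qed.

Lemma lsum_minus f g L : lsum (fun x => f x - g x) L = lsum f L - lsum g L.
Proof. unfold lsum; induction L as [|x L IH]; simpl; [lra|]. rewrite IH; lra. Qed.

Lemma lsum_const c L : lsum (fun _ => c) L = INR (length L) * c.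
Proof.
  induction L as [|x L IH]; [unfold lsum; simpl; lra|].
  rewrite lsum_cons, IH. cbn [length]. rewrite S_INR; lra.
Qed.

Lemma lsum_filter f (P : T -> bool) L :
  lsum f (filter P L) = lsum (fun x => if P x then f x else 0) L.
Proof.
  unfold lsum; induction L as [|x L IH]; simpl; [reflexivity|].
  destruct (P x); simpl; rewrite IH; lra.
Qed.

Lemma lsum_pos f L x :
  (forall y, In y L -> 0 <= f y) -> In x L -> 0 < f x -> 0 < lsum f L.
Proof.
  intros H Hx Hf. destruct (in_split _ _ Hx) as [l1 [l2 ->]].
  rewrite lsum_app, lsum_cons.
  assert (0 <= lsum f l1) by (apply lsum_nonneg; intros; apply H, in_or_app; auto).
  assert (0 <= lsum f l2) by (apply lsum_nonneg; intros; apply H, in_or_app; right; right; auto).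
  lra.
Qed.

Lemma lsum_nonzero f L : lsum f L <> 0 -> exists x, In x L /\ f x <> 0.
Proof.
  intros H. apply NNPP; intros N. apply H, lsum_zero.
  intros x Hx. apply NNPP; intros Hf. apply N; eauto.
Qed.

Lemma lsum_indicator (a : T) (v : R) L : NoDup L -> In a L ->
  lsum (fun b => if excluded_middle_informative (a = b) then v else 0) L = v.
Proof.
  intros N Ha. destruct (in_split _ _ Ha) as [l1 [l2 ->]].
  apply NoDup_remove_2 in N. rewrite lsum_app, lsum_cons, !lsum_zero.
  - destruct excluded_middle_informative; [lra | contradiction].
  - intros x Hx. destruct excluded_middle_informative; subst; [|reflexivity].
    exfalso; apply N, in_or_app; auto.
  - intros x Hx. destruct excluded_middle_informative; subst; [|reflexivity].
    exfalso; apply N, in_or_app; auto.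
Qed.

Lemma Rabs_lsum_le f g L : (forall x, In x L -> Rabs (f x) <= g x) -> Rabs (lsum f L) <= lsum g L.
Proof.
  induction L as [|x L IH]; intros H; rewrite ?lsum_cons.
  - unfold lsum; simpl; rewrite Rabs_R0; lra.
  - eapply Rle_trans; [apply Rabs_triang|].
    apply Rplus_le_compat; [apply H; left; auto | apply IH; intros; apply H; right; auto].
Qed.

Lemma lsum_sub_le f L1 L2 :
  NoDup L1 -> NoDup L2 -> (forall x, In x L1 -> 0 <= f x) -> (forall x, In x L2 -> 0 <= f x) ->
  (forall x, In x L1 -> f x <> 0 -> In x L2) -> lsum f L1 <= lsum f L2.
Proof.
  revert L2; induction L1 as [|a L1 IH]; intros L2 N1 N2 P1 P2 Inc; cbn [lsum fold_right].
  - apply lsum_nonneg; auto.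
  - inversion N1 as [|? ? Na N1']; subst.
    destruct (Req_dec (f a) 0) as [E|E].
    + rewrite E, Rplus_0_l. apply IH; auto; intros; [apply P1 | apply Inc]; auto; right; auto.
    + destruct (in_split _ _ (Inc a (or_introl eq_refl) E)) as [l1 [l2 ->]].
      rewrite (lsum_perm f _ (a :: l1 ++ l2)) by (symmetry; apply Permutation_middle).
      rewrite lsum_cons. apply Rplus_le_compat_l, IH; auto.
      * eapply NoDup_remove_1; eauto.
      * intros; apply P1; right; auto.
      * intros x Hx; apply P2, in_or_app. apply in_app_or in Hx as [|]; auto; right; right; auto.
      * intros x Hx Hf. destruct (in_app_or _ _ _ (Inc x (or_intror Hx) Hf)) as [|[->|]];
          [apply in_or_app; auto | contradiction | apply in_or_app; auto].
Qed.

Lemma lsum_cover_eq f L1 L2 :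
  NoDup L1 -> NoDup L2 -> (forall x, 0 <= f x) ->
  (forall x, f x <> 0 -> In x L1) -> (forall x, f x <> 0 -> In x L2) -> lsum f L1 = lsum f L2.
Proof. intros; apply Rle_antisym; apply lsum_sub_le; auto. Qed.

End ListSum.

Lemma lsum_map {T U} (f : U -> R) (h : T -> U) L : lsum f (map h L) = lsum (fun x => f (h x)) L.
Proof. unfold lsum; induction L as [|x L IH]; simpl; [reflexivity|]. rewrite IH; reflexivity. Qed.

Lemma lsum_flat_map {T U} (f : U -> R) (h : T -> list U) L :
  lsum f (flat_map h L) = lsum (fun x => lsum f (h x)) L.
Proof. induction L as [|x L IH]; cbn [flat_map]; [reflexivity|]. rewrite lsum_app, IH; reflexivity. Qed.

Lemma lsum_comm {T U} (f : T -> U -> R) L1 L2 :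
  lsum (fun x => lsum (f x) L2) L1 = lsum (fun y => lsum (fun x => f x y) L1) L2.
Proof.
  induction L1 as [|x L1 IH].
  - symmetry; apply lsum_zero; reflexivity.
  - rewrite lsum_cons, IH, <- lsum_plus. reflexivity.
Qed.
Lemma finite_union_cover {T U} (L : list T) (Q : T -> U -> Prop) :
  (forall x, In x L -> exists V, forall u, Q x u -> In u V) ->
  exists V, forall x u, In x L -> Q x u -> In u V.
Proof.
  induction L as [|a L IH]; intros H; [exists []; intros x u []|].
  destruct (H a (or_introl eq_refl)) as [V1 H1].
  destruct IH as [V2 H2]; [intros; apply H; right; auto|].
  exists (V1 ++ V2). intros x u [<-|Hx] Hq; apply in_or_app; eauto.
Qed.

Lemma set_sum_list {T} (C : T -> Prop) (f : T -> R) L :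
  NoDup L -> (forall x, In x L <-> C x) -> set_sum C f = lsum f L.
Proof.
  intros N H. unfold set_sum. destruct excluded_middle_informative as [e|n].
  - destruct (constructive_indefinite_description _ e) as [L' [N' H']]; cbn.
    apply lsum_perm, NoDup_Permutation; auto. intros x; rewrite H, H'; tauto.
  - exfalso; apply n; eauto.
Qed.

Lemma set_sum_ind {T} (C : T -> Prop) (f : T -> R) L :
  NoDup L -> (forall x, C x -> In x L) ->
  set_sum C f = lsum (fun x => if decb (C x) then f x else 0) L.
Proof.
  intros N H. rewrite <- lsum_filter. apply set_sum_list.
  - apply NoDup_filter; auto.
  - intros x. rewrite filter_In, decb_true. intuition.
Qed.

Lemma set_sum_single {T} (C : T -> Prop) (f : T -> R) a :
  (forall x, C x <-> x = a) -> set_sum C f = f a.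
Proof.
  intros H. rewrite (set_sum_list C f [a]).
  - rewrite lsum_cons; unfold lsum; simpl; lra.
  - repeat constructor; auto.
  - intros x; rewrite H; simpl; intuition.
Qed.

Lemma set_sum_zero {T} (C : T -> Prop) (f : T -> R) :
  (forall x, C x -> f x = 0) -> set_sum C f = 0.
Proof.
  intros H. unfold set_sum. destruct excluded_middle_informative as [e|n]; [|reflexivity].
  destruct (constructive_indefinite_description _ e) as [L [N HL]]; cbn.
  apply lsum_zero. intros x Hx; apply H, HL; auto.
Qed.

Lemma set_sum_nonneg {T} (C : T -> Prop) (f : T -> R) :
  (forall x, C x -> 0 <= f x) -> 0 <= set_sum C f.
Proof.
  intros H. unfold set_sum. destruct excluded_middle_informative as [e|n]; [|lra].
  destruct (constructive_indefinite_description _ e) as [L [N HL]]; cbn.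
  apply lsum_nonneg. intros x Hx; apply H, HL; auto.
Qed.

(** Duplicate-free enumeration of the support of [pi]; [[]] if [pi] is not finitely supported. *)
Definition supp {X : Type} (pi : X -> R) : list X :=
  match excluded_middle_informative (exists L, NoDup L /\ forall x, pi x <> 0 -> In x L) with
  | left H => filter (fun x => decb (0 < pi x)) (proj1_sig (constructive_indefinite_description _ H))
  | right _ => []
  end.

Section Distributions.
Context {X : Type} (pi : X -> R).

Lemma supp_NoDup : NoDup (supp pi).
Proof.
  unfold supp. destruct excluded_middle_informative as [e|n]; [|constructor].
  destruct (constructive_indefinite_description _ e) as [L [N HL]]; cbn. apply NoDup_filter; auto.
Qed.

Hypothesis Hpi : is_fdist pi.

Lemma supp_spec x : In x (supp pi) <-> 0 < pi x.
Proof.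
  destruct Hpi as [Hn [L0 [N0 [H0 _]]]]. unfold supp. destruct excluded_middle_informative as [e|n].
  - destruct (constructive_indefinite_description _ e) as [L [N H]]; cbn.
    rewrite filter_In, decb_true. split; [tauto|]. intros; split; auto. apply H; lra.
  - exfalso; apply n; eauto.
Qed.

Lemma supp_sum : lsum pi (supp pi) = 1.
Proof.
  destruct Hpi as [Hn [L0 [N0 [H0 S0]]]]. rewrite <- S0.
  apply lsum_cover_eq; auto using supp_NoDup.
  intros x Hx. apply supp_spec. specialize (Hn x). lra.
Qed.

Lemma fdist_pos_exists : exists x, 0 < pi x.
Proof.
  assert (H := supp_sum). destruct (supp pi) as [|x l] eqn:E.
  - unfold lsum in H; simpl in H; lra.
  - exists x. apply supp_spec. rewrite E; left; auto.
Qed.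

Lemma fdist_le1 x : pi x <= 1.
Proof.
  rewrite <- supp_sum. replace (pi x) with (lsum pi [x]) by (unfold lsum; simpl; lra).
  apply lsum_sub_le; auto using supp_NoDup; try (intros; apply Hpi).
  - repeat constructor; auto.
  - intros y [<-|[]] Hy. apply supp_spec. specialize (proj1 Hpi x). lra.
Qed.

End Distributions.

Lemma lub_inhabited (E : R -> Prop) l : is_lub E l -> exists x, E x.
Proof.
  intros [_ H]. apply NNPP; intros n. enough (l <= l - 1) by lra.
  apply H. intros x Hx; exfalso; eauto.
Qed.

Section InfSup.
Variable E : R -> Prop.

Lemma Rinf_ge d m : (forall r, E r -> m <= r) -> m <= d -> m <= Rinf E d.
Proof.
  intros H Hd. unfold Rinf. destruct excluded_middle_informative as [e|n]; auto.
  destruct (constructive_indefinite_description _ e) as [l [H1 H2]]; cbn.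
  enough (l <= - m) by lra. apply H2. intros x Hx. apply H in Hx. lra.
Qed.

Lemma Rinf_le d m r : E r -> (forall r', E r' -> m <= r') -> Rinf E d <= r.
Proof.
  intros Hr H. unfold Rinf. destruct excluded_middle_informative as [e|n].
  - destruct (constructive_indefinite_description _ e) as [l [H1 H2]]; cbn.
    enough (- r <= l) by lra. apply H1. rewrite Ropp_involutive; auto.
  - exfalso. apply n, upper_bound_thm.
    + exists (- m). intros x Hx. apply H in Hx. lra.
    + exists (- r). rewrite Ropp_involutive; auto.
Qed.

Lemma Rinf_le_dflt d : (forall r, E r -> r <= d) -> Rinf E d <= d.
Proof.
  intros H. unfold Rinf. destruct excluded_middle_informative as [e|n]; [|lra].
  destruct (constructive_indefinite_description _ e) as [l Hl]; cbn.
  destruct (lub_inhabited _ _ Hl) as [x Hx].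
  assert (x <= l) by (apply Hl; auto). apply H in Hx. lra.
Qed.

Lemma Rinf_lt d c : Rinf E d < c -> c <= d -> exists x, E x /\ x < c.
Proof.
  intros H Hc. unfold Rinf in H. destruct excluded_middle_informative as [e|n]; [|lra].
  destruct (constructive_indefinite_description _ e) as [l [H1 H2]]; cbn in H.
  apply NNPP; intros N. enough (l <= - c) by lra.
  apply H2. intros x Hx. apply NNPP; intros Q. apply N. exists (- x). split; auto. lra.
Qed.

Lemma Rsup_ge d x M : E x -> (forall r, E r -> r <= M) -> x <= Rsup E d.
Proof.
  intros Hx H. unfold Rsup. destruct excluded_middle_informative as [e|n].
  - destruct (constructive_indefinite_description _ e) as [l [H1 H2]]; cbn. apply H1; auto.
  - exfalso. apply n, upper_bound_thm; [exists M|]; eauto.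
Qed.

Lemma Rsup_zero : (forall r, E r -> r = 0) -> Rsup E 0 = 0.
Proof.
  intros H. unfold Rsup. destruct excluded_middle_informative as [e|n]; auto.
  destruct (constructive_indefinite_description _ e) as [l Hl]; cbn.
  destruct (lub_inhabited _ _ Hl) as [x Hx]. apply Rle_antisym.
  - apply Hl. intros y Hy; rewrite (H y Hy); lra.
  - rewrite <- (H x Hx). apply Hl; auto.
Qed.

End InfSup.

Definition min_list (l : list R) : R := fold_right Rmin 1 l.

Lemma min_list_spec l : (forall x, In x l -> 0 < x) ->
  0 < min_list l /\ min_list l <= 1 /\ forall x, In x l -> min_list l <= x.
Proof.
  induction l as [|a l IH]; intros H; [cbn; repeat split; [lra | lra | intros _ []]|].
  change (min_list (a :: l)) with (Rmin a (min_list l)).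
  destruct IH as [I1 [I2 I3]]; [intros; apply H; right; auto|].
  assert (0 < a) by (apply H; left; auto).
  assert (Rmin a (min_list l) <= a) by apply Rmin_l.
  assert (Rmin a (min_list l) <= min_list l) by apply Rmin_r.
  split; [apply Rmin_glb_lt; auto|]. split; [lra|].
  intros x [<-|Hx]; [lra|]. specialize (I3 x Hx). lra.
Qed.

(** Distance from [r] to the nearest other element of [W] (1 if there is none). *)
Definition gap (r : R) (W : list R) : R :=
  min_list (map (fun w => Rabs (w - r)) (filter (fun w => decb (w <> r)) W)).

Lemma gap_spec r W : 0 < gap r W /\ forall w, In w W -> Rabs (w - r) < gap r W -> w = r.
Proof.
  destruct (min_list_spec (map (fun w => Rabs (w - r)) (filter (fun w => decb (w <> r)) W)))
    as [G1 [_ G3]].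
  - intros x Hx. apply in_map_iff in Hx as [w [<- Hw]].
    apply filter_In in Hw as [_ Hw]. rewrite decb_true in Hw. apply Rabs_pos_lt. intros E; apply Hw; lra.
  - split; auto. intros w Hw Hlt. apply NNPP; intros Hne.
    enough (gap r W <= Rabs (w - r)) by lra.
    apply G3, (in_map (fun w => Rabs (w - r))), filter_In. rewrite decb_true; auto.
Qed.

Definition bound_inv (r : R) : nat := Z.to_nat (up (/ r)).

Lemma le_bound_inv r k : 0 < r -> INR k * r <= 1 -> (k <= bound_inv r)%nat.
Proof.
  intros Hr Hk. unfold bound_inv. destruct (archimed (/ r)) as [H1 _].
  assert (INR k <= / r) by (apply (Rmult_le_reg_r r); auto; rewrite Rinv_l; lra).
  assert (Hlt : INR k < IZR (up (/ r))) by lra.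
  rewrite INR_IZR_INZ in Hlt. apply lt_IZR in Hlt. lia.
Qed.

Fixpoint sums_upto (k : nat) (W : list R) : list R :=
  match k with
  | O => [0]
  | S k' => 0 :: flat_map (fun x => map (Rplus x) (sums_upto k' W)) W
  end.

Lemma In_sums_upto {T} (g : T -> R) W L k :
  (forall x, In x L -> In (g x) W) -> (length L <= k)%nat -> In (lsum g L) (sums_upto k W).
Proof.
  revert k; induction L as [|x L IH]; intros k H Hl.
  - destruct k; left; reflexivity.
  - destruct k as [|k]; [cbn in Hl; lia|]. rewrite lsum_cons. right.
    apply in_flat_map. exists (g x). split; [apply H; left; auto|].
    apply in_map, IH; [intros; apply H; right; auto | cbn in Hl; lia].
Qed.

(** * Probabilities of traces in deterministic systems *)

Lemma NoDup_flat_map_cons {U V} (k : U -> V) (g : U -> list (list V)) L :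
  (forall u v, k u = k v -> u = v) -> NoDup L -> (forall u, NoDup (g u)) ->
  NoDup (flat_map (fun u => map (cons (k u)) (g u)) L).
Proof.
  intros Hk N Hg. induction N as [|a L Ha N IH]; cbn [flat_map]; [constructor|].
  apply NoDup_app; auto.
  - apply FinFun.Injective_map_NoDup; auto. intros c1 c2 E; injection E; auto.
  - intros c Hc Hc'. apply in_map_iff in Hc as [c1 [<- _]].
    apply in_flat_map in Hc' as [y [Hy Hc']]. apply in_map_iff in Hc' as [c2 [E _]].
    injection E as E _. apply Hk in E as ->. contradiction.
Qed.

Lemma comp_tr_cons {X A} (a : A) (pi : X -> R) z (c : comp X A) :
  comp_tr ((a, pi, z) :: c) = a :: comp_tr c.
Proof. reflexivity. Qed.

Section Deterministic.
Context {X A : Type} (step : trans X A).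

Definition deterministic : Prop :=
  forall z a1 pi1 a2 pi2, step z a1 pi1 -> step z a2 pi2 -> a1 = a2 /\ pi1 = pi2.

Definition terminal (z : X) : Prop := forall a pi, ~ step z a pi.

Definition next (z : X) : option (A * (X -> R)) :=
  match excluded_middle_informative (exists p : A * (X -> R), step z (fst p) (snd p)) with
  | left H => Some (proj1_sig (constructive_indefinite_description _ H))
  | right _ => None
  end.

Lemma next_some {z a pi} : next z = Some (a, pi) -> step z a pi.
Proof.
  unfold next. destruct excluded_middle_informative as [e|n]; [|discriminate].
  destruct (constructive_indefinite_description _ e) as [[b q] Hp]; cbn.
  intros E; injection E as -> ->; auto.
Qed.

Lemma next_none z : next z = None <-> terminal z.
Proof.
  split.
  - unfold next. destruct excluded_middle_informative as [e|n]; [discriminate|].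
    intros _ a pi H. apply n. exists (a, pi); auto.
  - intros Ht. destruct (next z) as [[a pi]|] eqn:E; auto. exfalso; eapply Ht, next_some, E.
Qed.

Lemma next_cases z a : (exists pi, next z = Some (a, pi)) \/ (forall pi, next z <> Some (a, pi)).
Proof.
  destruct (next z) as [[b pi]|].
  - destruct (excluded_middle_informative (b = a)) as [<-|Hb]; [left; eauto|].
    right; intros pi' E; injection E; auto.
  - right; discriminate.
Qed.

Fixpoint last_state (z : X) (c : comp X A) : X :=
  match c with [] => z | (_, _, z') :: c' => last_state z' c' end.

(** In a deterministic PTS: the probability of the computations from [z] with trace [al] whose
    last state satisfies [stop] (see [lsum_comps] and [In_comps]). *)
Fixpoint ptrace (stop : X -> Prop) (z : X) (al : list A) : R :=
  match al with
  | [] => if excluded_middle_informative (stop z) then 1 else 0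
  | a :: al' =>
      match next z with
      | Some (b, pi) =>
          if excluded_middle_informative (b = a)
          then lsum (fun z' => pi z' * ptrace stop z' al') (supp pi) else 0
      | None => 0
      end
  end.

Definition ptr : X -> list A -> R := ptrace (fun _ => True).
Definition pmax : X -> list A -> R := ptrace terminal.

Fixpoint comps (stop : X -> Prop) (z : X) (al : list A) : list (comp X A) :=
  match al with
  | [] => if excluded_middle_informative (stop z) then [[]] else []
  | a :: al' =>
      match next z with
      | Some (b, pi) =>
          if excluded_middle_informative (b = a)
          then flat_map (fun z' => map (cons (b, pi, z')) (comps stop z' al')) (supp pi) else []
      | None => []
      end
  end.

Lemma ptrace_cons_next {z a pi} : next z = Some (a, pi) -> forall stop al,
  ptrace stop z (a :: al) = lsum (fun z' => pi z' * ptrace stop z' al) (supp pi).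
Proof.
  intros E stop al. cbn [ptrace]. rewrite E.
  destruct excluded_middle_informative; [reflexivity | contradiction].
Qed.

Lemma ptrace_cons_other {z a} : (forall pi, next z <> Some (a, pi)) -> forall stop al,
  ptrace stop z (a :: al) = 0.
Proof.
  intros E stop al. cbn [ptrace]. destruct (next z) as [[b pi]|]; [|reflexivity].
  destruct excluded_middle_informative as [<-|]; [exfalso; apply (E pi)|]; reflexivity.
Qed.

Lemma lsum_comps stop z al : lsum comp_pr (comps stop z al) = ptrace stop z al.
Proof.
  revert z; induction al as [|a al IH]; intros z; cbn [comps ptrace].
  - destruct excluded_middle_informative; unfold lsum; cbn; lra.
  - destruct (next z) as [[b pi]|]; [destruct excluded_middle_informative|]; try reflexivity.
    rewrite lsum_flat_map. apply lsum_ext; intros z' _.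
    rewrite lsum_map. cbn [comp_pr]. rewrite lsum_scal, IH; reflexivity.
Qed.

Lemma comps_NoDup stop z al : NoDup (comps stop z al).
Proof.
  revert z; induction al as [|a al IH]; intros z; cbn [comps].
  - destruct excluded_middle_informative; repeat constructor; auto.
  - destruct (next z) as [[b pi]|]; [destruct excluded_middle_informative|]; try constructor.
    apply NoDup_flat_map_cons; auto using supp_NoDup. intros u v E; injection E; auto.
Qed.

Definition bounded (z : X) (n : nat) : Prop :=
  forall c, valid_from step z c -> (length c <= n)%nat.

Section WellFormed.
Hypothesis Hdet : deterministic.
Hypothesis Hpts : is_PTS step.

Lemma next_step z a pi : step z a pi -> next z = Some (a, pi).
Proof.
  intros H. destruct (next z) as [[b pi']|] eqn:E.
  - destruct (Hdet _ _ _ _ _ H (next_some E)) as [-> ->]; reflexivity.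
  - exfalso. apply next_none in E. eapply E, H.
Qed.

Lemma In_comps stop z al c :
  In c (comps stop z al) <-> valid_from step z c /\ comp_tr c = al /\ stop (last_state z c).
Proof.
  revert z c; induction al as [|a al IH]; intros z c; cbn [comps].
  - destruct excluded_middle_informative as [Hs|Hs]; split.
    + intros [<-|[]]; cbn; auto.
    + intros [_ [Ht _]]; destruct c; [left; auto | discriminate].
    + intros [].
    + intros [_ [Ht Hst]]; destruct c; [contradiction | discriminate].
  - destruct (next_cases z a) as [[pi E]|E].
    + assert (Hs := next_some E). rewrite E.
      destruct excluded_middle_informative as [_|]; [|contradiction].
      rewrite in_flat_map. split.
      * intros [z' [Hz' Hc]]. apply in_map_iff in Hc as [c' [<- Hc']].
        apply IH in Hc' as [Hv [Ht Hst]]. rewrite comp_tr_cons, Ht.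
        refine (conj (conj Hs (conj _ Hv)) (conj eq_refl Hst)).
        apply (supp_spec pi); eauto.
      * intros [Hv [Ht Hst]]. destruct c as [|[[b pi'] z'] c']; [discriminate|].
        rewrite comp_tr_cons in Ht. injection Ht as -> Ht. destruct Hv as [H1 [H2 H3]].
        rewrite (next_step _ _ _ H1) in E. injection E as ->.
        exists z'. split; [apply (supp_spec pi); eauto|]. apply in_map, IH; auto.
    + assert (Hc : comps stop z (a :: al) = []).
      { cbn [comps]. destruct (next z) as [[b pi]|] eqn:E'; [|reflexivity].
        destruct excluded_middle_informative as [<-|]; [exfalso; eapply E; reflexivity | reflexivity]. }
      cbn [comps] in Hc. rewrite Hc. split; [intros []|].
      intros [Hv [Ht _]]. destruct c as [|[[b pi'] z'] c']; [discriminate|].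
      rewrite comp_tr_cons in Ht. injection Ht as -> _. destruct Hv as [H1 _].
      eapply E, next_step, H1.
Qed.

Lemma maximal_from_iff z c :
  maximal_from step z c <-> valid_from step z c /\ terminal (last_state z c).
Proof.
  unfold maximal_from. revert z; induction c as [|[[a pi] z'] c IH]; intros z;
    cbn [valid_from last_state app].
  - split.
    + intros [_ Hn]. split; auto. intros a pi Hs.
      destruct (fdist_pos_exists pi (Hpts _ _ _ Hs)) as [z' Hz'].
      apply Hn. exists [(a, pi, z')]. split; [discriminate | cbn; auto].
    + intros [_ Ht]. split; auto. intros [[|[[a pi] z'] e] [Hne Hv]]; [contradiction|].
      destruct Hv as [Hs _]. eapply Ht, Hs.
  - split.
    + intros [[H1 [H2 H3]] Hn].
      destruct (proj1 (IH z')) as [_ Ht]; [split; auto|].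
      * intros [ext [Hne Hv]]. apply Hn. exists ext; cbn; auto.
      * auto.
    + intros [[H1 [H2 H3]] Ht]. destruct (proj2 (IH z') (conj H3 Ht)) as [_ Hn].
      split; auto. intros [ext [Hne [_ [_ Hv]]]]. apply Hn; eauto.
Qed.

Lemma ptrace_nonneg stop al z : 0 <= ptrace stop z al.
Proof.
  revert z; induction al as [|a al IH]; intros z.
  - cbn; destruct excluded_middle_informative; lra.
  - destruct (next_cases z a) as [[pi E]|E];
      [rewrite (ptrace_cons_next E) | rewrite (ptrace_cons_other E); lra].
    apply lsum_nonneg; intros z' _. apply Rmult_le_pos; auto. apply (Hpts _ _ _ (next_some E)).
Qed.

Lemma bounded_succ z n a pi z' :
  bounded z n -> step z a pi -> 0 < pi z' -> exists n', n = S n' /\ bounded z' n'.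
Proof.
  intros B Hs Hp. destruct n as [|n].
  - specialize (B [(a, pi, z')] (conj Hs (conj Hp I))). cbn in B; lia.
  - exists n. split; auto. intros c Hv.
    specialize (B ((a, pi, z') :: c) (conj Hs (conj Hp Hv))). cbn in B; lia.
Qed.

Lemma bounded_ind (P : X -> Prop) :
  (forall z n, bounded z n -> (forall a pi z', step z a pi -> 0 < pi z' -> P z') -> P z) ->
  forall n z, bounded z n -> P z.
Proof.
  intros H n; induction n as [|n IH]; intros z B; apply (H z _ B); intros a pi z' Hs Hp;
    destruct (bounded_succ _ _ _ _ _ B Hs Hp) as [n' [En B']]; [discriminate|].
  injection En as <-; eauto.
Qed.

Lemma ptrace_long stop al : forall z n, bounded z n -> (n < length al)%nat -> ptrace stop z al = 0.
Proof.
  induction al as [|a al IH]; intros z n B Hl; [cbn in Hl; lia|].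
  destruct (next_cases z a) as [[pi E]|E]; [rewrite (ptrace_cons_next E) | apply (ptrace_cons_other E)].
  apply lsum_zero. intros z' Hz'. apply supp_spec in Hz'; [|apply (Hpts _ _ _ (next_some E))].
  destruct (bounded_succ _ _ _ _ _ B (next_some E) Hz') as [n' [-> B']].
  rewrite (IH z' n'); [lra | auto | cbn in Hl; lia].
Qed.

Lemma ptrace_finite_support stop n z : bounded z n ->
  exists U, forall al, ptrace stop z al <> 0 -> In al U.
Proof.
  revert n z. apply bounded_ind. intros z _ _ IH.
  destruct (next z) as [[a pi]|] eqn:E.
  - destruct (finite_union_cover (supp pi) (fun z' tl => ptrace stop z' tl <> 0)) as [V HV].
    { intros z' Hz'. apply (IH a pi z' (next_some E)), supp_spec; auto.
      apply (Hpts _ _ _ (next_some E)). }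
    exists ([] :: map (cons a) V). intros [|b tl] H; [left; auto|right].
    destruct (next_cases z b) as [[pi' E']|E']; [|rewrite (ptrace_cons_other E') in H; lra].
    rewrite E in E'. injection E' as -> ->. rewrite (ptrace_cons_next E) in H.
    apply lsum_nonzero in H as [z' [Hz' Hne]]. apply in_map, (HV z'); auto.
    intros E'; apply Hne; rewrite E'; lra.
  - exists [[]]. intros [|b tl] H; [left; auto|].
    rewrite (ptrace_cons_other (a := b)) in H; [lra|]. rewrite E; discriminate.
Qed.

Lemma ptr_decompose Acts : NoDup Acts -> forall al z,
  (forall b, ptr z (al ++ [b]) <> 0 -> In b Acts) ->
  ptr z al = pmax z al + lsum (fun b => ptr z (al ++ [b])) Acts.
Proof.
  intros N al. unfold ptr, pmax. induction al as [|a al IH]; intros z Cov; cbn [app] in *.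
  - destruct (next z) as [[a pi]|] eqn:E.
    + assert (F := Hpts _ _ _ (next_some E)).
      assert (Hone : ptrace (fun _ => True) z [a] = 1).
      { rewrite (ptrace_cons_next E), <- (supp_sum pi F). apply lsum_ext; intros z' _.
        cbn. destruct excluded_middle_informative; [lra | tauto]. }
      rewrite (lsum_ext _ (fun b => if excluded_middle_informative (a = b) then 1 else 0)).
      * rewrite lsum_indicator; auto; [|apply Cov; lra]. cbn [ptrace].
        destruct excluded_middle_informative as [_|[]]; [|exact I].
        destruct excluded_middle_informative as [Ht|_]; [|lra].
        exfalso; eapply Ht, next_some, E.
      * intros b _. destruct excluded_middle_informative as [<-|Hb]; auto.
        apply ptrace_cons_other. intros pi' E'. rewrite E in E'. injection E'; auto.
    + rewrite lsum_zero; [|intros b _; apply ptrace_cons_other; rewrite E; discriminate].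
      apply next_none in E. cbn [ptrace].
      do 2 (destruct excluded_middle_informative; try tauto). lra.
  - destruct (next_cases z a) as [[pi E]|E].
    + assert (F := Hpts _ _ _ (next_some E)). rewrite !(ptrace_cons_next E).
      rewrite (lsum_ext _ (fun b => lsum (fun z' => pi z' * ptrace (fun _ => True) z' (al ++ [b]))
                                         (supp pi)))
        by (intros; apply (ptrace_cons_next E)).
      rewrite <- lsum_comm, <- lsum_plus. apply lsum_ext; intros z' Hz'.
      rewrite lsum_scal, <- Rmult_plus_distr_l, <- IH; [reflexivity|].
      intros b Hb. apply Cov. rewrite (ptrace_cons_next E). apply Rgt_not_eq, (lsum_pos _ _ z'); auto.
      * intros y _. apply Rmult_le_pos; [apply F | apply ptrace_nonneg].
      * apply Rmult_lt_0_compat; [apply (supp_spec pi F); auto|].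
        assert (0 <= ptrace (fun _ => True) z' (al ++ [b])) by apply ptrace_nonneg. lra.
    + rewrite !(ptrace_cons_other E), lsum_zero; [lra|]. intros; apply (ptrace_cons_other E).
Qed.

Lemma pmax_sum_cover n z : bounded z n ->
  forall U, NoDup U -> (forall al, pmax z al <> 0 -> In al U) -> lsum (pmax z) U = 1.
Proof.
  revert n z.
  apply (bounded_ind (fun z => forall U, NoDup U -> (forall al, pmax z al <> 0 -> In al U) ->
                               lsum (pmax z) U = 1)).
  intros z n B IH U N Cov. unfold pmax in *.
  destruct (next z) as [[a pi]|] eqn:E.
  - assert (Hs := next_some E). assert (F := Hpts _ _ _ Hs).
    destruct (finite_union_cover (supp pi) (fun z' tl => ptrace terminal z' tl <> 0)) as [V HV].
    { intros z' Hz'. apply (supp_spec pi F) in Hz'.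
      destruct (bounded_succ _ _ _ _ _ B Hs Hz') as [n' [_ B']].
      eapply ptrace_finite_support, B'. }
    set (V' := nodup (fun x y : list A => excluded_middle_informative (x = y)) V).
    rewrite (lsum_cover_eq _ U (map (cons a) V')); auto using ptrace_nonneg.
    2: { apply FinFun.Injective_map_NoDup, NoDup_nodup. intros x y Exy; injection Exy; auto. }
    2: { intros [|b tl] H.
         - cbn in H. destruct excluded_middle_informative as [Ht|]; [|lra].
           exfalso; eapply Ht, Hs.
         - destruct (next_cases z b) as [[pi' E']|E']; [|rewrite (ptrace_cons_other E') in H; lra].
           rewrite E in E'. injection E' as <- <-. rewrite (ptrace_cons_next E) in H.
           apply lsum_nonzero in H as [z' [Hz' Hne]]. apply in_map, nodup_In, (HV z'); auto.
           intros E'; apply Hne; rewrite E'; lra. }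
    rewrite lsum_map, (lsum_ext _ (fun tl => lsum (fun z' => pi z' * ptrace terminal z' tl) (supp pi)))
      by (intros; apply (ptrace_cons_next E)).
    rewrite lsum_comm, <- (supp_sum pi F). apply lsum_ext; intros z' Hz'.
    rewrite lsum_scal, (IH a pi z' Hs); [lra | apply (supp_spec pi F); auto | apply NoDup_nodup |].
    intros tl Htl. apply nodup_In, (HV z'); auto.
  - apply next_none in E.
    assert (Hnil : forall al, ptrace terminal z al <> 0 -> al = []).
    { intros [|b tl] H; auto. exfalso; apply H, ptrace_cons_other. intros pi' E'.
      eapply E, next_some, E'. }
    rewrite (lsum_cover_eq _ U [[]]); auto using ptrace_nonneg.
    + rewrite lsum_cons. cbn. destruct excluded_middle_informative; [|contradiction].
      unfold lsum; cbn; lra.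
    + repeat constructor; auto.
    + intros al H. rewrite (Hnil al H). left; auto.
Qed.

Lemma pmax_sum_le1 n z B : bounded z n -> NoDup B -> lsum (pmax z) B <= 1.
Proof.
  intros Bd N. destruct (ptrace_finite_support terminal n z Bd) as [U HU].
  rewrite <- (pmax_sum_cover n z Bd (nodup (fun x y : list A => excluded_middle_informative (x = y)) U));
    [|apply NoDup_nodup | intros; apply nodup_In; auto].
  apply lsum_sub_le; unfold pmax; auto using NoDup_nodup, ptrace_nonneg.
  intros al _ H. apply nodup_In; auto.
Qed.

End WellFormed.
End Deterministic.

Lemma ptr_agree_iff_pmax_agree {X1 X2 A} (s1 : trans X1 A) (s2 : trans X2 A) z1 z2 n1 n2 :
  is_PTS s1 -> is_PTS s2 -> bounded s1 z1 n1 -> bounded s2 z2 n2 ->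
  (forall al, ptr s1 z1 al = ptr s2 z2 al) <-> (forall al, pmax s1 z1 al = pmax s2 z2 al).
Proof.
  intros P1 P2 B1 B2.
  destruct (ptrace_finite_support s1 P1 (fun _ => True) n1 z1 B1) as [U1 HU1].
  destruct (ptrace_finite_support s2 P2 (fun _ => True) n2 z2 B2) as [U2 HU2].
  (* every action that can extend a trace with positive probability occurs in [Acts] *)
  set (Acts := nodup (fun x y : A => excluded_middle_informative (x = y)) (concat U1 ++ concat U2)).
  assert (NA : NoDup Acts) by apply NoDup_nodup.
  assert (Hext : forall al b (U : list (list A)), In (al ++ [b]) U -> In b (concat U)).
  { intros al b U H. apply in_concat. exists (al ++ [b]).
    split; auto. apply in_or_app; right; left; auto. }
  assert (C1 : forall al, ptr s1 z1 al = pmax s1 z1 al + lsum (fun b => ptr s1 z1 (al ++ [b])) Acts).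
  { intros al. apply ptr_decompose; auto.
    intros b Hb. apply nodup_In, in_or_app; left. eapply Hext, HU1, Hb. }
  assert (C2 : forall al, ptr s2 z2 al = pmax s2 z2 al + lsum (fun b => ptr s2 z2 (al ++ [b])) Acts).
  { intros al. apply ptr_decompose; auto.
    intros b Hb. apply nodup_In, in_or_app; right. eapply Hext, HU2, Hb. }
  split.
  - intros H al. specialize (C1 al); specialize (C2 al).
    rewrite H, (lsum_ext _ (fun b => ptr s2 z2 (al ++ [b]))) in C1 by auto. lra.
  - intros H. set (K := max n1 n2).
    (* downward induction on the length of the trace, starting beyond both bounds *)
    assert (G : forall m al, (K < length al + m)%nat -> ptr s1 z1 al = ptr s2 z2 al).
    { induction m as [|m IH]; intros al Hl.
      - unfold ptr. rewrite (ptrace_long s1 P1 _ al z1 n1), (ptrace_long s2 P2 _ al z2 n2); auto; lia.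
      - destruct (Nat.lt_ge_cases K (length al + m)) as [h|h]; [apply IH; auto|].
        rewrite C1, C2, H. f_equal. apply lsum_ext. intros b _. apply IH.
        rewrite length_app; cbn; lia. }
    intros al. apply (G (S K)). lia.
Qed.

(** * Trace formulae, the distance, and resolutions *)

Fixpoint formula_trace {A} (Phi : tformula A) : list A :=
  match Phi with TTop => [] | TDiam a Phi' => a :: formula_trace Phi' end.

Fixpoint trace_formula {A} (al : list A) : tformula A :=
  match al with [] => TTop | a :: al' => TDiam a (trace_formula al') end.

Lemma formula_traceK {A} (al : list A) : formula_trace (trace_formula al) = al.
Proof. induction al; cbn; f_equal; auto. Qed.

Lemma trace_formulaK {A} (Phi : tformula A) : trace_formula (formula_trace Phi) = Phi.
Proof. induction Phi; cbn; f_equal; auto. Qed.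

Lemma csat_depth_iff {X A} (c : comp X A) Phi :
  csat c Phi /\ length c = depth Phi <-> comp_tr c = formula_trace Phi.
Proof.
  revert c; induction Phi as [|a Phi IH]; intros [|[[b pi] z] c]; cbn [csat length depth formula_trace].
  - tauto.
  - split; [intros [_ H]|]; discriminate.
  - split; [intros [[] _] | discriminate].
  - rewrite comp_tr_cons. split.
    + intros [[-> H1] H2]. f_equal. apply IH; auto.
    + intros E. injection E as -> E. apply IH in E as [H1 H2]. auto.
Qed.

Section Distance.
Context {A : Type}.
Implicit Types (x y : tdformula A) (w : tformula A * tformula A -> R).

Lemma dtf_cases (p : tformula A * tformula A) :
  (fst p = snd p /\ dtf p = 0) \/ (fst p <> snd p /\ dtf p = 1).
Proof. unfold dtf. destruct excluded_middle_informative; auto. Qed.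

Lemma coupling_cost_nonneg w : is_fdist w -> 0 <= set_sum (fun p => w p <> 0) (fun p => w p * dtf p).
Proof.
  intros [Hw _]. apply set_sum_nonneg. intros p _.
  apply Rmult_le_pos; auto. destruct (dtf_cases p) as [[_ ->]|[_ ->]]; lra.
Qed.

Lemma Dtdf_nonneg x y : 0 <= Dtdf x y.
Proof.
  apply Rinf_ge; [|lra]. intros r [w [[Fw _] ->]]. apply coupling_cost_nonneg; auto.
Qed.

Lemma Dtdf_le1 x y : Dtdf x y <= 1.
Proof.
  apply Rinf_le_dflt. intros r [w [[Fw _] ->]]. destruct Fw as [Hw [L [N [HL S]]]].
  rewrite (set_sum_ind _ _ L N HL). rewrite <- S. apply lsum_le. intros p _.
  specialize (Hw p). unfold decb. destruct excluded_middle_informative; [|lra].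
  destruct (dtf_cases p) as [[_ ->]|[_ ->]]; lra.
Qed.

Definition diag_coupling x (p : tformula A * tformula A) : R :=
  if excluded_middle_informative (fst p = snd p) then x (fst p) else 0.

Lemma diag_coupling_support x p :
  diag_coupling x p <> 0 -> snd p = fst p /\ x (fst p) <> 0.
Proof. unfold diag_coupling. destruct excluded_middle_informative; [auto | lra]. Qed.

Lemma diag_coupling_diag x Phi : diag_coupling x (Phi, Phi) = x Phi.
Proof.
  unfold diag_coupling; cbn. destruct excluded_middle_informative; [reflexivity | contradiction].
Qed.

Lemma diag_coupling_marginal x (sel : tformula A * tformula A -> tformula A) Phi :
  (forall p, diag_coupling x p <> 0 -> sel p = fst p) -> sel (Phi, Phi) = Phi ->
  set_sum (fun p => sel p = Phi /\ diag_coupling x p <> 0) (diag_coupling x) = x Phi.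
Proof.
  intros Hsel Hdiag. destruct (Req_dec (x Phi) 0) as [E|E].
  - rewrite E. apply set_sum_zero. intros p [H1 H2]. exfalso.
    destruct (diag_coupling_support x p H2) as [_ H3]. rewrite Hsel in H1 by auto. subst; contradiction.
  - rewrite (set_sum_single _ _ (Phi, Phi)); [apply diag_coupling_diag|].
    intros [p1 p2]. split.
    + intros [H1 H2]. destruct (diag_coupling_support x _ H2) as [H3 _]. cbn in H3; subst p2.
      rewrite Hsel in H1 by auto. cbn in H1; subst; reflexivity.
    + intros E'; injection E' as -> ->. rewrite diag_coupling_diag, Hdiag; auto.
Qed.

Lemma diag_coupling_spec x : is_tdf x -> coupling x x (diag_coupling x).
Proof.
  intros Fx. split; [split|split]; [| |intros Phi; apply diag_coupling_marginal; auto..].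
  - intros p; unfold diag_coupling; destruct excluded_middle_informative; [apply Fx | lra].
  - destruct Fx as [_ [L [N [HL S]]]]. exists (map (fun Phi => (Phi, Phi)) L). split; [|split].
    + apply FinFun.Injective_map_NoDup; auto. intros a b E; injection E; auto.
    + intros [p1 p2] H. destruct (diag_coupling_support x _ H) as [H1 H2]; cbn in *; subst.
      apply in_map_iff. exists p1; split; auto.
    + change (lsum (diag_coupling x) (map (fun Phi => (Phi, Phi)) L) = 1).
      rewrite lsum_map, (lsum_ext _ x) by (intros; apply diag_coupling_diag). exact S.
  - intros p H. apply (proj1 (diag_coupling_support x p H)).
Qed.

Lemma Dtdf_refl x : is_tdf x -> Dtdf x x = 0.
Proof.
  intros Fx. apply Rle_antisym; [|apply Dtdf_nonneg].
  apply (Rinf_le _ _ 0).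
  - exists (diag_coupling x). split; [apply diag_coupling_spec; auto|].
    symmetry. apply set_sum_zero. intros p H. destruct (diag_coupling_support x p H) as [H1 _].
    destruct (dtf_cases p) as [[_ ->]|[E _]]; [lra | congruence].
  - intros r [w [[Fw _] ->]]. apply coupling_cost_nonneg; auto.
Qed.

Lemma Dtdf_ge_diff x y Phi : is_tdf x -> is_tdf y -> Rabs (x Phi - y Phi) <= Dtdf x y.
Proof.
  intros Fx Fy. apply Rinf_ge.
  - intros r [w [[Fw [M1 M2]] ->]]. destruct Fw as [Hw [L [N [HL _]]]].
    rewrite <- (M1 Phi), <- (M2 Phi), !(set_sum_ind _ _ L N) by (intros p Hp; apply HL; tauto).
    rewrite <- lsum_minus. apply Rabs_lsum_le. intros p _. specialize (Hw p).
    destruct (dtf_cases p) as [[Ep ->]|[Ep ->]].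
    + rewrite <- Ep, Rminus_diag_eq, Rabs_R0 by reflexivity.
      unfold decb; destruct excluded_middle_informative; lra.
    + unfold decb; repeat destruct excluded_middle_informative; apply Rabs_le;
        solve [split; lra | exfalso; intuition congruence].
  - assert (0 <= x Phi) by apply Fx. assert (0 <= y Phi) by apply Fy.
    assert (x Phi <= 1) by (apply fdist_le1; auto). assert (y Phi <= 1) by (apply fdist_le1; auto).
    apply Rabs_le. lra.
Qed.

End Distance.

Lemma eq_off_support {T} (f g : T -> R) L :
  NoDup L -> lsum f L = 1 -> (forall x, In x L -> g x = f x) -> (forall x, ~ In x L -> f x = 0) ->
  (forall x, 0 <= g x) -> (forall B, NoDup B -> lsum g B <= 1) -> forall x, g x = f x.
Proof.
  intros N S Heq H0 Hg Hle x. destruct (classic (In x L)) as [Hx|Hx]; auto.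
  rewrite H0 by auto. apply Rle_antisym; auto.
  assert (H := Hle (x :: L) (NoDup_cons _ Hx N)).
  rewrite lsum_cons, (lsum_ext g f), S in H by auto. lra.
Qed.

Section Resolutions.
Context {S A : Type} (st : trans S A).

Lemma res_valid_lift s (Z : resolution st s) c z :
  valid_from (rstep Z) z c -> exists c', valid_from st (rcorr Z z) c' /\ length c' = length c.
Proof.
  revert z; induction c as [|[[a pi] z'] c IH]; intros z Hv; [exists []; cbn; auto|].
  destruct Hv as [H1 [H2 H3]]. destruct (r_match Z _ _ _ H1) as [pi' [Hs Hp]].
  destruct (IH z' H3) as [c' [Hv' Hl]]. exists ((a, pi', rcorr Z z') :: c').
  cbn; rewrite <- Hp; auto.
Qed.

Lemma res_bounded s (Z : resolution st s) : finite_proc st s -> exists n, bounded (rstep Z) (rinit Z) n.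
Proof.
  intros [n Hn]. exists n. intros c Hv. destruct (res_valid_lift s Z c _ Hv) as [c' [Hv' <-]].
  rewrite r_corr_init in Hv'. auto.
Qed.

Lemma Pr_trace_ptr s (Z : resolution st s) al : Pr_trace Z al = ptr (rstep Z) (rinit Z) al.
Proof.
  unfold Pr_trace, ptr. rewrite (set_sum_list _ _ (comps (rstep Z) (fun _ => True) (rinit Z) al)).
  - apply lsum_comps.
  - apply comps_NoDup.
  - intros c. rewrite In_comps by first [exact (r_det Z) | exact (r_pts Z)]. tauto.
Qed.

Definition res_tdf {s} (Z : resolution st s) : tdformula A :=
  fun Phi => pmax (rstep Z) (rinit Z) (formula_trace Phi).

Lemma set_sum_maximal s (Z : resolution st s) Phi :
  set_sum (fun c : comp (rZ Z) A =>
             maximal_from (rstep Z) (rinit Z) c /\ csat c Phi /\ length c = depth Phi)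
          comp_pr = res_tdf Z Phi.
Proof.
  unfold res_tdf, pmax.
  rewrite (set_sum_list _ _ (comps (rstep Z) (terminal (rstep Z)) (rinit Z) (formula_trace Phi))).
  - apply lsum_comps.
  - apply comps_NoDup.
  - intros c. rewrite In_comps, maximal_from_iff, <- csat_depth_iff
      by first [exact (r_det Z) | exact (r_pts Z)].
    tauto.
Qed.

Lemma res_tdf_nonneg s (Z : resolution st s) Phi : 0 <= res_tdf Z Phi.
Proof. apply ptrace_nonneg, r_pts. Qed.

Lemma res_tdf_sum_le1 s (Z : resolution st s) B :
  finite_proc st s -> NoDup B -> lsum (res_tdf Z) B <= 1.
Proof.
  intros F N. destruct (res_bounded s Z F) as [n Bd]. unfold res_tdf.
  rewrite <- (lsum_map (pmax (rstep Z) (rinit Z))).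
  apply (pmax_sum_le1 _ (r_pts Z) n); auto.
  apply FinFun.Injective_map_NoDup; auto.
  intros P Q E. rewrite <- (trace_formulaK P), <- (trace_formulaK Q), E; reflexivity.
Qed.

Lemma res_tdf_in_L s (Z : resolution st s) : finite_proc st s -> Lset st s (res_tdf Z).
Proof.
  intros F. split; [split|exists Z; intros Phi _; apply set_sum_maximal].
  - apply res_tdf_nonneg.
  - destruct (res_bounded s Z F) as [n Bd].
    destruct (ptrace_finite_support _ (r_pts Z) (terminal (rstep Z)) n _ Bd) as [U HU].
    set (U' := nodup (fun x y : list A => excluded_middle_informative (x = y)) U).
    exists (map trace_formula U'). split; [|split].
    + apply FinFun.Injective_map_NoDup; [|apply NoDup_nodup].
      intros P Q E. rewrite <- (formula_traceK P), <- (formula_traceK Q), E; reflexivity.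
    + intros Phi H. rewrite <- (trace_formulaK Phi). apply in_map, nodup_In, HU, H.
    + change (lsum (res_tdf Z) (map trace_formula U') = 1).
      rewrite lsum_map. unfold res_tdf.
      rewrite (lsum_ext _ (pmax (rstep Z) (rinit Z))) by (intros; rewrite formula_traceK; auto).
      apply (pmax_sum_cover _ (r_pts Z) n); auto; [apply NoDup_nodup|].
      intros al H. apply nodup_In, HU, H.
Qed.

Lemma Lset_res t y : Lset st t y ->
  exists Zt : resolution st t, forall Phi, 0 < y Phi -> res_tdf Zt Phi = y Phi.
Proof. intros [_ [Zt H]]. exists Zt. intros Phi Hp. rewrite <- set_sum_maximal; auto. Qed.

Lemma Pr_trace_agree_iff s t (Zs : resolution st s) (Zt : resolution st t) :
  finite_proc st s -> finite_proc st t ->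
  (forall al, Pr_trace Zs al = Pr_trace Zt al) <-> (forall Phi, res_tdf Zs Phi = res_tdf Zt Phi).
Proof.
  intros Fs Ft. destruct (res_bounded s Zs Fs) as [n1 B1], (res_bounded t Zt Ft) as [n2 B2].
  transitivity (forall al, pmax (rstep Zs) (rinit Zs) al = pmax (rstep Zt) (rinit Zt) al).
  - rewrite <- (ptr_agree_iff_pmax_agree _ _ _ _ n1 n2); auto using r_pts.
    split; intros H al; specialize (H al); rewrite !Pr_trace_ptr in *; auto.
  - split; intros H.
    + intros Phi; apply H.
    + intros al. rewrite <- (formula_traceK al). apply H.
Qed.

Section FiniteValues.
Hypothesis Hpts : is_PTS st.
Hypothesis Himf : image_finite st.

Definition transitions (u : S) (a : A) : list (S -> R) :=
  match excluded_middle_informative (exists L, forall pi, st u a pi -> In pi L) with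
  | left H => proj1_sig (constructive_indefinite_description _ H)
  | right _ => []
  end.

Lemma In_transitions u a pi : st u a pi -> In pi (transitions u a).
Proof.
  intros H. unfold transitions. destruct excluded_middle_informative as [e|n].
  - destruct (constructive_indefinite_description _ e) as [L HL]; cbn; auto.
  - exfalso; apply n, Himf.
Qed.

(** A finite list containing [pmax z al] for every state [z] of every resolution with
    [rcorr z = u].  A successor [v] of a transition [pi'] of [u] may be copied in the resolution,
    but each copy carries mass [pi' v], so there are at most [1 / min pi'] successors. *)
Fixpoint values (al : list A) (u : S) : list R :=
  match al with
  | [] => [0; 1]
  | a :: al' =>
      0 :: flat_map (fun pi' =>
             sums_upto (bound_inv (min_list (map pi' (supp pi'))))
                       (flat_map (fun v => map (Rmult (pi' v)) (values al' v)) (supp pi')))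
           (transitions u a)
  end.

Lemma pmax_in_values s (Z : resolution st s) al z :
  In (pmax (rstep Z) z al) (values al (rcorr Z z)).
Proof.
  revert z; induction al as [|a al IH]; intros z; unfold pmax in *.
  - cbn. destruct excluded_middle_informative; [right; left | left]; reflexivity.
  - destruct (next_cases (rstep Z) z a) as [[pi E]|E];
      [|rewrite (ptrace_cons_other _ E); left; reflexivity].
    assert (Hs := next_some _ E). assert (F := r_pts Z _ _ _ Hs).
    destruct (r_match Z _ _ _ Hs) as [pi' [Hst Hpi]]. assert (F' := Hpts _ _ _ Hst).
    destruct (min_list_spec (map pi' (supp pi'))) as [M1 [_ M3]].
    { intros r Hr. apply in_map_iff in Hr as [v [<- Hv]]. apply (supp_spec pi'); auto. }
    rewrite (ptrace_cons_next _ E). right. apply in_flat_map.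
    exists pi'. split; [apply In_transitions; auto|]. apply In_sums_upto.
    + intros z' Hz'. apply (supp_spec pi F) in Hz'. apply in_flat_map.
      exists (rcorr Z z'). split; [apply (supp_spec pi' F'); rewrite <- Hpi; auto|].
      rewrite Hpi. apply in_map, IH.
    + apply le_bound_inv; auto. rewrite <- lsum_const, <- (supp_sum pi F).
      apply lsum_le. intros z' Hz'. apply (supp_spec pi F) in Hz'. rewrite Hpi in *.
      apply M3, in_map, (supp_spec pi' F'); auto.
Qed.

Lemma res_tdf_isolated t (Zt : resolution st t) (y Psi : tdformula A) Phi :
  (forall Phi, 0 < y Phi -> res_tdf Zt Phi = y Phi) -> 0 < Psi Phi ->
  Rabs (Psi Phi - y Phi) < Rmin (Psi Phi) (gap (Psi Phi) (values (formula_trace Phi) t)) ->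
  res_tdf Zt Phi = Psi Phi.
Proof.
  intros HZt HPsi Hclose.
  assert (G1 := Rmin_l (Psi Phi) (gap (Psi Phi) (values (formula_trace Phi) t))).
  assert (G2 := Rmin_r (Psi Phi) (gap (Psi Phi) (values (formula_trace Phi) t))).
  assert (Hy : 0 < y Phi) by (apply Rabs_def2 in Hclose; lra).
  apply (proj2 (gap_spec (Psi Phi) (values (formula_trace Phi) t))).
  - assert (H := pmax_in_values t Zt (formula_trace Phi) (rinit Zt)).
    rewrite r_corr_init in H. exact H.
  - rewrite HZt, Rabs_minus_sym by auto. lra.
Qed.

End FiniteValues.

Definition half_dist (s t : S) : R :=
  Rsup (fun r => exists x, Lset st s x /\
                   r = Rinf (fun r' => exists y, Lset st t y /\ r' = Dtdf x y) 1) 0.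

Lemma half_dist_le0_sim (Hpts : is_PTS st) (Himf : image_finite st) s t :
  finite_proc st s -> finite_proc st t -> half_dist s t <= 0 ->
  forall Zs : resolution st s, exists Zt : resolution st t, forall al, Pr_trace Zs al = Pr_trace Zt al.
Proof.
  intros Fs Ft Hd Zs.
  set (Psi := res_tdf Zs). assert (LPsi : Lset st s Psi) by (apply res_tdf_in_L; auto).
  assert (FPsi := proj1 LPsi).
  set (g := fun Phi => Rmin (Psi Phi) (gap (Psi Phi) (values (formula_trace Phi) t))).
  destruct (min_list_spec (map g (supp Psi))) as [E1 [E2 E3]].
  { intros r Hr. apply in_map_iff in Hr as [Phi [<- HPhi]].
    apply Rmin_glb_lt; [apply (supp_spec Psi); auto | apply gap_spec]. }
  set (eps := min_list (map g (supp Psi))) in *.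
  destruct (Rinf_lt (fun r => exists y, Lset st t y /\ r = Dtdf Psi y) 1 eps)
    as [r [[y [Ly ->]] Hy]]; auto.
  { eapply Rle_lt_trans; [|apply E1]. eapply Rle_trans; [|apply Hd].
    apply (Rsup_ge _ _ _ 1); [exists Psi; split; auto|].
    intros r [x [_ ->]]. apply Rinf_le_dflt. intros r [y [_ ->]]. apply Dtdf_le1. }
  destruct (Lset_res t y Ly) as [Zt HZt]. exists Zt.
  apply Pr_trace_agree_iff; auto. intros Phi. symmetry.
  apply (eq_off_support Psi (res_tdf Zt) (supp Psi));
    auto using supp_NoDup, supp_sum, res_tdf_nonneg, res_tdf_sum_le1.
  - intros Phi' HPhi'. apply (res_tdf_isolated Hpts Himf t Zt y); auto; [apply (supp_spec Psi); auto|].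
    assert (Hb := Dtdf_ge_diff Psi y Phi' FPsi (proj1 Ly)).
    assert (E3' := E3 (g Phi') (in_map g _ _ HPhi')). unfold g in E3'. lra.
  - intros Phi' H. destruct (Rle_lt_or_eq_dec _ _ (proj1 FPsi Phi')) as [Hp|]; auto.
    exfalso; apply H, (supp_spec Psi FPsi); auto.
Qed.

Lemma sim_half_dist_eq0 s t :
  finite_proc st s -> finite_proc st t ->
  (forall Zs : resolution st s,
     exists Zt : resolution st t, forall al, Pr_trace Zs al = Pr_trace Zt al) ->
  half_dist s t = 0.
Proof.
  intros Fs Ft H. apply Rsup_zero. intros r [x [[Fx [Zs HZs]] ->]].
  destruct (H Zs) as [Zt HZt].
  assert (Hres := proj1 (Pr_trace_agree_iff s t Zs Zt Fs Ft) HZt).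
  (* [x] is realised by [Zt] as well, and is at distance 0 from itself *)
  assert (Lt : Lset st t x).
  { split; auto. exists Zt. intros Phi HPhi.
    rewrite set_sum_maximal, <- Hres, <- set_sum_maximal; auto. }
  apply Rle_antisym.
  - rewrite <- (Dtdf_refl x Fx). apply (Rinf_le _ _ 0); [exists x; auto|].
    intros r [y [_ ->]]; apply Dtdf_nonneg.
  - apply Rinf_ge; [intros r [y [_ ->]]; apply Dtdf_nonneg | lra].
Qed.

End Resolutions.

Theorem theorem16 (S A : Type) (st : trans S A)
  (Hpts : is_PTS st) (Himf : image_finite st)
  (Hfin : forall s : S, finite_proc st s) :
  forall s t : S, DL st s t = 0 <-> ptrace_equiv st s t.
Proof.
  intros s t. change (DL st s t) with (Rmax (half_dist st s t) (half_dist st t s)).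
  split.
  - intros H. assert (H1 := Rmax_l (half_dist st s t) (half_dist st t s)).
    assert (H2 := Rmax_r (half_dist st s t) (half_dist st t s)).
    split; apply half_dist_le0_sim; auto; lra.
  - intros [H1 H2]. rewrite !sim_half_dist_eq0; auto. apply Rmax_left; lra.
Qed.
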